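(* Let $G=(V,E)$ be a graph. For every $v\in V$ the relation $\prec_v$ on $V$ is a strict weak order, i.e., it is irreflexive and transitive and incomparability with respect to $\prec_v$ is transitive.
   Context: Graphs are finite, simple, undirected, with nonempty vertex set. A module of $G=(V,E)$ is a nonempty $M\subseteq V$ such that every $u\in V\setminus M$ is adjacent either to all or to none of the vertices of $M$. For $v,w\in V$, $M_{v,w}$ is the intersection of all modules of $G$ containing both $v$ and $w$. For $v\in V$, the relation $\prec_v$ on $V$ is defined by $w_1\prec_v w_2$ iff $M_{v,w_2}\subsetneq M_{v,w_1}$. Elements $a,b$ are incomparable w.r.t. $\prec_v$ if neither $a\prec_v b$ nor $b\prec_v a$. *)

From mathcomp Require Import all_boot.
Set Implicit Arguments. Unset Strict Implicit. Unset Printing Implicit Defensive.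

(* A finite simple graph: vertex type T : finType, adjacency e : rel T
   assumed symmetric and irreflexive (hypotheses in the theorem). *)

Definition is_module (T : finType) (e : rel T) (M : {set T}) : bool :=
  (M != set0) &&
  [forall u in ~: M, [forall x in M, e u x] || [forall x in M, ~~ e u x]].

Definition Mvw (T : finType) (e : rel T) (v w : T) : {set T} :=
  \bigcap_(M : {set T} | is_module e M && (v \in M) && (w \in M)) M.

Definition precv (T : finType) (e : rel T) (v w1 w2 : T) : bool :=
  Mvw e v w2 \proper Mvw e v w1.

Definition incomparable (T : finType) (e : rel T) (v a b : T) : bool :=
  ~~ precv e v a b && ~~ precv e v b a.

From mathcomp Require Import all_boot.
Set Implicit Arguments. Unset Strict Implicit. Unset Printing Implicit Defensive.

(* Irreflexivity and transitivity are inherited from strict inclusion.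
   Transitivity of incomparability follows from negative transitivity: if
   A := M_{v,a} is strictly inside C := M_{v,c}, then any B := M_{v,b} strictly
   contains A or is strictly inside C. Otherwise minimality of the M_{v,_}
   forces a \notin B, b \notin C and c \notin A, and then C \ (A \ B) is a
   module containing v and c but not a, contradicting the minimality of C. *)

Section Modules.

Variables (T : finType) (e : rel T).

Lemma moduleP (M : {set T}) :
  reflect ((exists x, x \in M) /\
           (forall u x y, u \notin M -> x \in M -> y \in M -> e u x = e u y))
          (is_module e M).
Proof.
apply: (iffP andP) => [[/set0Pn M_n0 /forall_inP adjM] | [/set0Pn M_n0 adjM]].
  split=> // u x y uM xM yM.
  have uCM : u \in ~: M by rewrite in_setC.
  have /orP[/forall_inP all_adj | /forall_inP no_adj] := adjM u uCM.
    by rewrite !all_adj.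
  by rewrite (negbTE (no_adj x xM)) (negbTE (no_adj y yM)).
split=> //; apply/forall_inP => u; rewrite in_setC => uM.
have [x xM] := set0Pn _ M_n0.
case Eux: (e u x); apply/orP; [left | right]; apply/forall_inP => y yM;
  by rewrite (adjM u y x) ?Eux.
Qed.

Lemma module_adj (M : {set T}) u x y :
  is_module e M -> u \notin M -> x \in M -> y \in M -> e u x = e u y.
Proof. by case/moduleP=> _; apply. Qed.

Hypothesis e_sym : symmetric e.

(* The module property of C fails to cover only u \in A \ B against
   z \in C \ (A :|: B); there e u z is transported to e u v through b. *)
Lemma module_setD_setD (A B C : {set T}) v b :
  is_module e A -> is_module e B -> is_module e C -> A \subset C ->
  v \in A -> v \in B -> b \in B -> b \notin C ->
  is_module e (C :\: (A :\: B)).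
Proof.
move=> mA mB mC sAC vA vB bB bC; have vC := subsetP sAC v vA.
apply/moduleP; split=> [|u x y]; first by exists v; rewrite !inE vB vC.
suff adj_v z : u \notin C :\: (A :\: B) -> z \in C :\: (A :\: B) -> e u z = e u v.
  by move=> uM xM yM; rewrite !adj_v.
rewrite !inE => uM /andP[zAB zC].
have [uC | uC] := boolP (u \in C); last exact: module_adj mC uC zC vC.
move: uM; rewrite uC negb_and negbK orbF => /andP[uB uA].
have [zB | zB] := boolP (z \in B); first exact: module_adj mB uB zB vB.
have zA : z \notin A by move: zAB; rewrite zB.
rewrite e_sym (module_adj mA zA uA vA) (module_adj mB zB vB bB) e_sym.
by rewrite (module_adj mC bC zC uC) e_sym (module_adj mB uB bB vB).
Qed.

End Modules.

Section ModuleSpan.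

Variables (T : finType) (e : rel T) (v : T).

Lemma mem_Mvw_l w : v \in Mvw e v w.
Proof. by apply/bigcapP => M /andP[/andP[]]. Qed.

Lemma mem_Mvw_r w : w \in Mvw e v w.
Proof. by apply/bigcapP => M /andP[/andP[]]. Qed.

Lemma Mvw_min w (M : {set T}) :
  is_module e M -> v \in M -> w \in M -> Mvw e v w \subset M.
Proof. by move=> mM vM wM; apply: bigcap_inf; rewrite mM vM wM. Qed.

Lemma Mvw_module w : is_module e (Mvw e v w).
Proof.
apply/moduleP; split=> [|u x y]; first by exists v; apply: mem_Mvw_l.
rewrite -in_setC setC_bigcap => /bigcupP[M PM]; rewrite inE => uM.
move=> /bigcapP/(_ M PM) xM /bigcapP/(_ M PM) yM.
by case/andP: PM => /andP[mM _] _; apply: module_adj mM uM xM yM.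
Qed.

Lemma Mvw_sub w w' : w' \in Mvw e v w -> Mvw e v w' \subset Mvw e v w.
Proof. by apply: Mvw_min; [apply: Mvw_module | apply: mem_Mvw_l]. Qed.

Lemma Mvw_eq w w' :
  w' \in Mvw e v w -> ~~ precv e v w w' -> Mvw e v w' = Mvw e v w.
Proof. by rewrite /precv => /Mvw_sub/eqVproper[-> | ->]. Qed.

Hypothesis e_sym : symmetric e.

Lemma precv_neg_trans a b c :
  ~~ precv e v c b -> ~~ precv e v b a -> ~~ precv e v c a.
Proof.
rewrite /precv => ncb nba; apply/negP => AC.
have aB : a \notin Mvw e v b.
  by apply/negP => /Mvw_eq/(_ nba) Eab; move: ncb; rewrite -Eab AC.
have bC : b \notin Mvw e v c.
  by apply/negP => /Mvw_eq/(_ ncb) Ebc; move: nba; rewrite Ebc AC.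
have cA : c \notin Mvw e v a.
  by apply/negP => /Mvw_sub sCA; move: AC; rewrite properE sCA andbF.
have sAC : Mvw e v a \subset Mvw e v c by case/andP: AC.
have sCC' : Mvw e v c \subset Mvw e v c :\: (Mvw e v a :\: Mvw e v b).
  apply: Mvw_min.
  - by apply: module_setD_setD (Mvw_module _) (Mvw_module _) (Mvw_module _)
      sAC (mem_Mvw_l _) (mem_Mvw_l _) (mem_Mvw_r b) bC.
  - by rewrite !inE !mem_Mvw_l.
  - by rewrite !inE (negbTE cA) andbF mem_Mvw_r.
have /subsetP/(_ a) := subset_trans sAC sCC'.
by rewrite !inE mem_Mvw_r (negbTE aB) => /(_ isT).
Qed.

End ModuleSpan.

Theorem lemma3p13 (T : finType) (e : rel T)
  (e_sym : symmetric e) (e_irr : irreflexive e) (v : T) :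
  (forall w, ~~ precv e v w w) /\
  (forall a b c, precv e v a b -> precv e v b c -> precv e v a c) /\
  (forall a b c, incomparable e v a b -> incomparable e v b c ->
     incomparable e v a c).
Proof.
split; first by move=> w; rewrite /precv properxx.
split; first by move=> a b c ab bc; apply: proper_trans bc ab.
move=> a b c /andP[nab nba] /andP[nbc ncb].
by rewrite /incomparable (precv_neg_trans e_sym nab nbc)
  (precv_neg_trans e_sym ncb nba).
Qed.
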